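(* Let $G=(V,E)$ be a word-representable graph with $n=|V|$ and representation number $k$. Unless $G$ is a circle graph containing $K_{n-1}$ as an induced subgraph, $G$ is $\left(\lceil kn/2\rceil-1\right)$-complete square-free uniform word-representable.
   Context: A graph $G=(V,E)$ is word-representable if there is a word $w$ over $V$, containing every letter of $V$, such that distinct $x,y\in V$ alternate in $w$ (deleting all other letters yields $xyxy\cdots$ or $yxyx\cdots$) iff $xy\in E$; $w$ represents $G$. A word is $k$-uniform if every letter occurs exactly $k$ times, and uniform if it is $k$-uniform for some $k$. The representation number of a word-representable graph is the least $k$ such that it is represented by a $k$-uniform word. For a word $w$ over $\Sigma$ and $S\subseteq\Sigma$, $w_S$ denotes the word obtained from $w$ by deleting all letters not in $S$. For an integer $p\ge1$, $w$ contains a $p$-complete square if there exists $S\subseteq\Sigma$ such that $w_S$ contains a factor $XX$ with $X\in S^+$ and $|X|\ge p$; otherwise $w$ is $p$-complete square-free. A graph $G$ is $p$-complete square-free uniform word-representable if it is represented by a uniform word $w$ that is $p$-complete square-free. *)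

From mathcomp Require Import all_boot.
Set Implicit Arguments. Unset Strict Implicit. Unset Printing Implicit Defensive.

Definition simple_graph (V : finType) (E : rel V) : Prop :=
  symmetric E /\ irreflexive E.

Definition restrict (V : finType) (S : {set V}) (w : seq V) : seq V :=
  [seq a <- w | a \in S].

Definition alternate (V : finType) (w : seq V) (x y : V) : Prop :=
  let u := restrict [set x; y] w in
  forall i, i.+1 < size u -> nth x u i != nth x u i.+1.

Definition represents (V : finType) (E : rel V) (w : seq V) : Prop :=
  (forall x : V, x \in w) /\
  (forall x y : V, x != y -> (alternate w x y <-> E x y)).

Definition k_uniform (V : finType) (k : nat) (w : seq V) : Prop :=
  forall x : V, count_mem x w = k.

Definition uniform (V : finType) (w : seq V) : Prop :=
  exists k, k_uniform k w.

Definition word_representable (V : finType) (E : rel V) : Prop :=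
  exists w : seq V, represents E w.

Definition representation_number (V : finType) (E : rel V) (k : nat) : Prop :=
  (exists w : seq V, k_uniform k w /\ represents E w) /\
  (forall k', k' < k -> ~ exists w : seq V, k_uniform k' w /\ represents E w).

Definition has_complete_square (V : finType) (p : nat) (w : seq V) : Prop :=
  exists (S : {set V}) (u X v : seq V),
    [/\ X != [::], all (fun a => a \in S) X, p <= size X &
        restrict S w = u ++ X ++ X ++ v].

Definition complete_square_free (V : finType) (p : nat) (w : seq V) : Prop :=
  ~ has_complete_square p w.

Definition csf_uniform_word_representable (V : finType) (E : rel V) (p : nat)
  : Prop :=
  exists w : seq V, uniform w /\ represents E w /\ complete_square_free p w.

(* Circle graphs: intersection graphs of chords of a circle.  Chord of x has
   endpoints at positions (c x).1, (c x).2 on the circle (cyclic order given by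
   the order on nat); all endpoints pairwise distinct.  Two such chords cross
   iff their endpoints interleave. *)
Definition strictly_between (a b t : nat) : bool := (minn a b < t < maxn a b).

Definition chords_cross (c d : nat * nat) : bool :=
  strictly_between c.1 c.2 d.1 (+) strictly_between c.1 c.2 d.2.

Definition circle_graph (V : finType) (E : rel V) : Prop :=
  exists c : V -> nat * nat,
    injective (fun p : V * bool => if p.2 then (c p.1).1 else (c p.1).2) /\
    (forall x y : V, x != y -> (E x y <-> chords_cross (c x) (c y))).

Definition has_induced_clique (V : finType) (E : rel V) (m : nat) : Prop :=
  exists A : {set V}, #|A| = m /\
    (forall x y, x \in A -> y \in A -> x != y -> E x y).

(* Let w be a k-uniform word representing G with k minimal, n = |V|, and let w_S = u X X v
   with 2|X| >= kn - 2.  Since k|S| = |u| + 2|X| + |v|, either |S| = n - 1, k = 2 and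
   w_S = X X, or S = V and |uv| <= 2.  In the latter case k = |uv|_z + 2|X|_z for every letter
   z, and a letter missing from uv makes all |uv|_z even, so uv is empty or aa.  If uv is
   empty, X is a k/2-uniform representant; if uv = aa and k >= 4, so is a^(k/2) followed by X
   with a deleted; both contradict the minimality of k.  In the remaining cases w is 2-uniform
   and w_T = X X for some T of size n - 1: the letters of T occur once in X, hence pairwise
   alternate, and joining the two occurrences of each letter of w by a chord shows that G is
   a circle graph.  Graphs with at most two vertices, and complete graphs (k = 1, represented
   by w w), are exceptional as well. *)

From mathcomp Require Import all_boot zify.
Set Implicit Arguments. Unset Strict Implicit. Unset Printing Implicit Defensive.

Section Restrict.
Variable V : finType.
Implicit Types (S T : {set V}) (s : seq V) (z : V).

Lemma restrict_cat S s1 s2 : restrict S (s1 ++ s2) = restrict S s1 ++ restrict S s2.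
Proof. exact: filter_cat. Qed.

Lemma restrict_restrict S T s : T \subset S -> restrict T (restrict S s) = restrict T s.
Proof.
move/subsetP=> TS; rewrite /restrict -filter_predI; apply: eq_filter => t /=.
by case: (boolP (t \in T)) => // /TS ->.
Qed.

Lemma restrict_id S s : {subset s <= S} -> restrict S s = s.
Proof. by move=> sS; apply/all_filterP/allP. Qed.

Lemma restrict_nil S s : {in s, forall t, t \notin S} -> restrict S s = [::].
Proof.
by move=> sS; rewrite /restrict (eq_in_filter (a2 := pred0)) ?filter_pred0 // => t /sS /negbTE.
Qed.

Lemma restrictT s : restrict [set: V] s = s.
Proof. by apply: restrict_id => t; rewrite in_setT. Qed.

Lemma count_restrict S z s :
  count_mem z (restrict S s) = if z \in S then count_mem z s else 0.
Proof.
rewrite count_filter; case: ifP => zS.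
  by apply: eq_count => t /=; case: eqP => // ->; rewrite zS.
by rewrite (eq_count (a2 := pred0)) ?count_pred0 // => t /=; case: eqP => // ->; rewrite zS.
Qed.

Lemma count_mem_set S s : count (mem S) s = \sum_(x in S) count_mem x s.
Proof.
elim: s => [|z s IHs] /=; first by rewrite big1.
rewrite IHs big_split /=; congr (_ + _); case: (boolP (z \in S)) => zS.
  by rewrite (bigD1 z) //= eqxx big1 // => t /andP[_ /negbTE]; rewrite eq_sym => ->.
by rewrite big1 // => t tS; case: eqP => // ezt; rewrite ezt tS in zS.
Qed.

Lemma size_restrict_uniform k S s : k_uniform k s -> size (restrict S s) = k * #|S|.
Proof.
move=> sk; rewrite size_filter count_mem_set (eq_bigr (fun=> k)) => [|x _]; last exact: sk.
by rewrite sum_nat_const mulnC.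
Qed.

End Restrict.

Section Alternation.
Variable V : finType.
Implicit Types (s r p w X : seq V) (x y z : V).

Definition neqr : rel V := [rel a b | a != b].

Lemma alternateE w x y : alternate w x y <-> sorted neqr (restrict [set x; y] w).
Proof.
split=> [alt_w|/(sortedP x) alt_w i]; last exact: alt_w.
by apply/(sortedP x) => i; apply: alt_w.
Qed.

Lemma eq_alternate w w' x y :
  restrict [set x; y] w = restrict [set x; y] w' -> (alternate w x y <-> alternate w' x y).
Proof. by rewrite !alternateE => ->. Qed.

Lemma alternate_sym w x y : alternate w x y <-> alternate w y x.
Proof. by rewrite !alternateE setUC. Qed.

Lemma restrict_pair_all w x y : all (mem [set x; y]) (restrict [set x; y] w).
Proof. exact: filter_all. Qed.

Lemma count_restrict_pairl w x y : count_mem x (restrict [set x; y] w) = count_mem x w.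
Proof. by rewrite count_restrict !inE eqxx. Qed.

Lemma count_restrict_pairr w x y : count_mem y (restrict [set x; y] w) = count_mem y w.
Proof. by rewrite setUC count_restrict_pairl. Qed.

Lemma count_alternating x y p : x != y -> all (mem [set x; y]) p -> path neqr x p ->
  count_mem x (x :: p) = count_mem y (x :: p) + (last x p == x).
Proof.
elim: p x y => [|t p IHp] x y nxy /= pxy; first by rewrite eqxx (negbTE nxy).
case/andP: pxy => txy pxy /andP[nxt path_p]; have ty : t = y.
  by move: txy nxt; rewrite !inE => /orP[]/eqP-> //; rewrite /neqr /= eqxx.
subst t; have nyx : y != x by rewrite eq_sym.
have := IHp y x nyx; rewrite setUC => /(_ pxy path_p) /=; rewrite (negbTE nxy) (negbTE nyx).
have : last y p \in [set x; y] by have := mem_last y p; rewrite inE => /orP[/eqP->//|/(allP pxy)].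
by rewrite !inE => /orP[]/eqP->; rewrite !eqxx ?(negbTE nxy) ?(negbTE nyx) /=; lia.
Qed.

Lemma alternating_head x y z p : x != y -> all (mem [set x; y]) (z :: p) ->
  path neqr z p ->
  count_mem z (z :: p) = count_mem (if z == x then y else x) (z :: p) + (last z p == z).
Proof.
move=> nxy /= /andP[zxy pxy]; rewrite !inE in zxy; case: (z =P x) => [->|nzx].
  by apply: count_alternating.
have zy : z = y by move: zxy => /orP[/eqP|/eqP].
by subst z; apply: count_alternating; rewrite 1?eq_sym // setUC.
Qed.

Lemma sorted_pair_count x y r : x != y -> all (mem [set x; y]) r -> sorted neqr r ->
  count_mem x r <= (count_mem y r).+1.
Proof.
move=> nxy; case: r => [|z p] // rxy path_p; have := alternating_head nxy rxy path_p.
have nyx : y != x by rewrite eq_sym.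
have : z \in [set x; y] by case/andP: rxy.
by rewrite !inE => /orP[]/eqP zxy; subst z; rewrite ?eqxx ?(negbTE nyx); case: (last _ p == _); lia.
Qed.

Lemma alternating_last_neq x y z p : x != y -> all (mem [set x; y]) (z :: p) ->
  path neqr z p -> count_mem x (z :: p) = count_mem y (z :: p) -> last z p != z.
Proof.
move=> nxy zp path_p exy; have := alternating_head nxy zp path_p.
have nyx : y != x by rewrite eq_sym.
have : z \in [set x; y] by case/andP: zp.
by rewrite !inE => /orP[]/eqP zxy; subst z; rewrite ?eqxx ?(negbTE nyx) exy;
  case: (last _ p == _); lia.
Qed.

Lemma sorted_pair_cat_self x y r : x != y -> all (mem [set x; y]) r ->
  count_mem x r = count_mem y r -> r != [::] -> sorted neqr (r ++ r) = sorted neqr r.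
Proof.
case: r => [|z p] // nxy zp exy _; rewrite /= cat_path /=.
case path_p: (path neqr z p); rewrite //= andbT; exact: alternating_last_neq exy.
Qed.

Lemma sorted_pair_once x y r : x != y -> all (mem [set x; y]) r ->
  count_mem x r = 1 -> count_mem y r = 1 -> sorted neqr r.
Proof.
move=> nxy rxy cx cy.
have size_r : size r = 2.
  have cxy : count (predI (pred1 x) (pred1 y)) r = 0.
    rewrite (eq_count (a2 := pred0)) ?count_pred0 // => t /=.
    by case: (t =P x) => // ->; rewrite (negbTE nxy).
  rewrite -count_predT -(eq_in_count (a1 := predU (pred1 x) (pred1 y))).
    by rewrite -[LHS]addn0 -[X in _ + X = _]cxy count_predUI cx cy.
  by move=> t /(allP rxy); rewrite !inE.
case: r size_r rxy cx cy => [|a [|b []]] // _ /and3P[ax bx _].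
have nyx : y != x by rewrite eq_sym.
by move: ax bx; rewrite !inE => /orP[]/eqP-> /orP[]/eqP->;
  rewrite /neqr /= ?eqxx ?(negbTE nxy) ?(negbTE nyx).
Qed.

Lemma alternate_infix u s v x y : alternate (u ++ s ++ v) x y -> alternate s x y.
Proof. by rewrite !alternateE !restrict_cat => /cat_sorted2[_ /cat_sorted2[]]. Qed.

Lemma alternate_count s x y :
  x != y -> alternate s x y -> count_mem x s <= (count_mem y s).+1.
Proof.
move=> nxy /alternateE; rewrite -(count_restrict_pairl s x y) -(count_restrict_pairr s x y).
exact: sorted_pair_count (restrict_pair_all s x y).
Qed.

Lemma alternate_cat_self X x y : x != y -> 0 < count_mem x X ->
  count_mem x X = count_mem y X -> alternate (X ++ X) x y <-> alternate X x y.
Proof.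
move=> nxy cx_gt0 cxy; rewrite !alternateE restrict_cat.
rewrite (sorted_pair_cat_self nxy) ?restrict_pair_all //.
  by rewrite count_restrict_pairl count_restrict_pairr.
by apply: contraTneq cx_gt0 => rX; rewrite -(count_restrict_pairl X x y) rX.
Qed.

Lemma alternate_once X x y :
  x != y -> count_mem x X = 1 -> count_mem y X = 1 -> alternate X x y.
Proof.
move=> nxy cx cy; apply/alternateE; apply: (sorted_pair_once nxy (restrict_pair_all X x y)).
  by rewrite count_restrict_pairl.
by rewrite count_restrict_pairr.
Qed.

End Alternation.
Arguments neqr {V}.

Section Circle.
Variable V : finType.
Implicit Types (w s A B C : seq V) (x y z : V).

(* Position in [w] of the [j]-th occurrence of [y], counting from [0]. *)
Fixpoint occ y j w : nat :=
  if w is z :: w' then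
    if z == y then (if j is j'.+1 then (occ y j' w').+1 else 0) else (occ y j w').+1
  else 0.

Lemma occ_lt y j w T :
  j < count_mem y w -> (occ y j w < T) = (j < count_mem y (take T w)).
Proof.
elim: w j T => [|z w IHw] j [|T] //=; case: (z =P y) => _ /=.
  by rewrite add1n; case: j => [|j] //= cj; rewrite ltnS IHw.
by rewrite add0n => cj; rewrite ltnS IHw.
Qed.

Lemma occ_nth y j w y0 : j < count_mem y w -> nth y0 w (occ y j w) = y.
Proof.
elim: w j => [|z w IHw] j //=; case: (z =P y) => [->|_] /=; last by rewrite add0n => /IHw.
by rewrite add1n; case: j => [|j] //= /IHw.
Qed.

Lemma occ_ltS y j w : j.+1 < count_mem y w -> occ y j w < occ y j.+1 w.
Proof.
elim: w j => [|z w IHw] j //=; case: (z =P y) => [_|_] /=; last by rewrite add0n ltnS => /IHw.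
by rewrite add1n; case: j => [|j] //= /IHw.
Qed.

Lemma occ_cat y j A s : y \notin A -> occ y j (A ++ s) = size A + occ y j s.
Proof.
elim: A => [|z A IHA] //=; rewrite inE negb_or => /andP[nzy nyA].
by rewrite eq_sym (negbTE nzy) IHA.
Qed.

Lemma split_first x w : x \in w -> exists A C, w = A ++ x :: C /\ x \notin A.
Proof.
elim: w => [|z w IHw] //; rewrite inE; case: (x =P z) => [->|nxz] /= xw.
  by exists [::], w.
have [A [C [-> nxA]]] := IHw xw; exists (z :: A), C.
by rewrite inE negb_or nxA andbT; split=> //; apply/eqP.
Qed.

Lemma split_twice x w : count_mem x w = 2 ->
  exists A B C, w = A ++ x :: B ++ x :: C /\ [/\ x \notin A, x \notin B & x \notin C].
Proof.
move=> cx2; have xw : x \in w by rewrite -has_pred1 has_count cx2.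
have [A [C1 [ew nxA]]] := split_first xw.
have cxC1 : count_mem x C1 = 1.
  by move: cx2; rewrite ew count_cat (count_memPn nxA) /= eqxx; lia.
have xC1 : x \in C1 by rewrite -has_pred1 has_count cxC1.
have [B [C [eC1 nxB]]] := split_first xC1.
exists A, B, C; split; first by rewrite ew eC1.
split=> //; apply/count_memPn; move: cxC1.
by rewrite eC1 count_cat (count_memPn nxB) /= eqxx; lia.
Qed.

Lemma restrict_pair_notin x y s :
  x \notin s -> restrict [set x; y] s = nseq (count_mem y s) y.
Proof.
elim: s => [|z s IHs] //=; rewrite inE negb_or => /andP[nxz nxs].
rewrite /restrict /= !inE eq_sym (negbTE nxz) /=.
case: (z =P y) => [->|_] /=; first by rewrite -[LHS]/(y :: restrict _ s) IHs.
by rewrite -[LHS]/(restrict _ s) IHs.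
Qed.

(* The right-hand side records which of the two [y]s lie strictly between the [x]s. *)
Lemma sorted_two_separators x y (a b c : nat) : x != y -> a + b + c = 2 ->
  sorted neqr (nseq a y ++ x :: nseq b y ++ x :: nseq c y) =
  ((a <= 0 < a + b) (+) (a <= 1 < a + b)).
Proof.
move=> nxy; have nyx : y != x by rewrite eq_sym.
by case: a => [|[|[|a]]]; case: b => [|[|[|b]]]; case: c => [|[|[|c]]] //= abc;
  rewrite /neqr /= ?eqxx ?nxy ?nyx.
Qed.

Definition chord w x : nat * nat := (occ x 0 w, occ x 1 w).

Lemma chord_endpoints_inj w : k_uniform 2 w ->
  injective (fun p : V * bool => if p.2 then (chord w p.1).1 else (chord w p.1).2).
Proof.
move=> w2 [x b] [y b'] /= e.
have nth_end z (c : bool) : nth x w (if c then occ z 0 w else occ z 1 w) = z.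
  by case: c; apply: occ_nth; rewrite w2.
have exy : x = y by rewrite -(nth_end x b) e nth_end.
subst y; congr pair; have := @occ_ltS x 0 w; rewrite w2 => /(_ isT).
by case: b b' e => [] [] // ->; rewrite ltnn.
Qed.

Lemma chords_cross_alternate w x y : k_uniform 2 w -> x != y ->
  chords_cross (chord w x) (chord w y) = sorted neqr (restrict [set x; y] w).
Proof.
move=> w2 nxy; have nyx : y != x by rewrite eq_sym.
have [A [B [C [ew [nxA nxB nxC]]]]] := split_twice (w2 x).
have cy : count_mem y A + count_mem y B + count_mem y C = 2.
  by move: (w2 y); rewrite ew !count_cat /= count_cat /= (negbTE nxy); lia.
have -> : restrict [set x; y] w =
    nseq (count_mem y A) y ++ x :: nseq (count_mem y B) y ++ x :: nseq (count_mem y C) y.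
  rewrite ew !restrict_cat /= !inE eqxx /= restrict_cat /= !inE eqxx /=.
  by rewrite !restrict_pair_notin.
rewrite sorted_two_separators // /chords_cross /strictly_between /chord /=.
have -> : occ x 0 w = size A by rewrite ew occ_cat //= eqxx addn0.
have -> : occ x 1 w = size A + size B + 1.
  by rewrite ew occ_cat //= eqxx occ_cat //= eqxx addn0 addn1 addnS.
rewrite (minn_idPl (leq_trans (leq_addr _ _) (leq_addr _ _))).
rewrite (maxn_idPr (leq_trans (leq_addr _ _) (leq_addr _ _))).
rewrite ![size A < _]ltnNge -![_ <= size A]ltnS !occ_lt ?w2 //.
have -> : take (size A).+1 w = A ++ [:: x].
  by rewrite ew -cat1s catA take_size_cat // size_cat addn1.
have -> : take (size A + size B + 1) w = A ++ x :: B.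
  rewrite ew (_ : A ++ x :: B ++ x :: C = (A ++ x :: B) ++ (x :: C)); last by rewrite -catA.
  by rewrite take_size_cat // size_cat /= addn1 addnS.
by rewrite !count_cat /= (negbTE nxy) /= !addn0 -!leqNgt.
Qed.

Lemma uniform2_circle_graph (E : rel V) w : k_uniform 2 w -> represents E w -> circle_graph E.
Proof.
move=> w2 [_ Ealt]; exists (chord w); split; first exact: chord_endpoints_inj.
by move=> x y nxy; rewrite -Ealt // alternateE chords_cross_alternate.
Qed.

End Circle.

Section Exceptional.
Variable V : finType.
Implicit Types (E : rel V) (w u X v : seq V).

Definition exceptional E := circle_graph E /\ has_induced_clique E (#|V| - 1).

Lemma exceptional_of_square E w (S : {set V}) X : k_uniform 2 w -> represents E w ->
  #|S| = #|V| - 1 -> restrict S w = X ++ X -> exceptional E.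
Proof.
move=> w2 Ew cardS wS; split; first exact: uniform2_circle_graph w2 Ew.
exists S; split=> // x y xS yS nxy; apply/Ew.2 => //.
have cX z : z \in S -> count_mem z X = 1.
  by move=> zS; have := count_restrict S z w; rewrite zS w2 wS count_cat; lia.
have xyS : [set x; y] \subset S by apply/subsetP => t; rewrite !inE => /orP[]/eqP->.
rewrite (@eq_alternate _ w (X ++ X)); last by rewrite -(@restrict_restrict _ S _ w xyS) wS.
by rewrite alternate_cat_self ?cX //; apply: alternate_once; rewrite ?cX.
Qed.

Lemma exceptional_of_card_le2 E : simple_graph E -> #|V| <= 2 -> exceptional E.
Proof.
move=> [Esym Eirr] V2; case: (pickP (@predT V)) => [a _|V0]; last first.
  split; first by exists (fun=> (0, 0)); split=> [[x ?]|x]; have := V0 x.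
  by exists set0; rewrite cards0 (eq_card0 V0); split=> // x; rewrite inE.
have other x y : x != a -> y != a -> x = y.
  have : #|[set~ a]| <= 1 by rewrite cardsC1; lia.
  by move=> /card_le1_eqP Va xa ya; apply: Va; rewrite !inE.
split; last first.
  exists [set~ a]; split=> [|x y]; first by rewrite cardsC1 subn1.
  by rewrite !inE => xa ya /eqP[]; apply: other.
pose t := [exists z, E a z].
have Eat y : y != a -> E a y = t.
  move=> ya; apply/idP/existsP => [Eay|[z Eaz]]; first by exists y.
  have za : z != a by apply: contraTneq Eaz => ->; rewrite Eirr.
  by rewrite (other y z ya za).
exists (fun x => if x == a then (0, if t then 2 else 1) else (if t then 1 else 2, 3)); split.
  move=> [x bx] [y b'] /=; case: (x =P a) => [->|xa]; case: (y =P a) => [->|ya];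
    try rewrite (other x y (introN eqP xa) (introN eqP ya));
    by case: bx; case: b'; case: (t).
move=> x y nxy; case: (x =P a) => [exa|/eqP xa]; case: (y =P a) => [eya|/eqP ya].
- by rewrite exa eya eqxx in nxy.
- by rewrite exa Eat //; case: (t).
- by rewrite eya Esym Eat //; case: (t).
- by rewrite (other x y xa ya) eqxx in nxy.
Qed.

End Exceptional.

Section Shrinking.
Variable V : finType.
Implicit Types (E : rel V) (w u X v : seq V).

Lemma half_square_representant E k X : k_uniform k (X ++ X) -> represents E (X ++ X) ->
  k_uniform (k %/ 2) X /\ represents E X.
Proof.
move=> XXk [XXin XXalt].
have cX z : count_mem z X = k %/ 2 by have := XXk z; rewrite count_cat; lia.
have Xin z : z \in X by have := XXin z; rewrite mem_cat orbb.
split=> //; split=> // x y nxy; rewrite -XXalt // alternate_cat_self ?cX //.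
by rewrite -(cX x) -has_count has_pred1.
Qed.

Lemma double_representant E k w : 0 < k -> k_uniform k w -> represents E w ->
  k_uniform k.*2 (w ++ w) /\ represents E (w ++ w).
Proof.
move=> k_gt0 wk [win walt]; split=> [z|]; first by rewrite count_cat wk addnn.
split=> [z|x y nxy]; first by rewrite mem_cat win.
by rewrite alternate_cat_self ?wk ?walt.
Qed.

Lemma alternate_setC1 w w' x y a : x != a -> y != a ->
  restrict [set~ a] w = restrict [set~ a] w' -> (alternate w x y <-> alternate w' x y).
Proof.
move=> xa ya wa; have xya : [set x; y] \subset [set~ a].
  by apply/subsetP => t; rewrite !inE => /orP[]/eqP->.
by apply: eq_alternate; rewrite -(@restrict_restrict _ _ _ w xya) wa restrict_restrict.
Qed.

Lemma restrict_setC1_square w u X v a : w = u ++ X ++ X ++ v -> u ++ v = [:: a; a] ->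
  restrict [set~ a] w = restrict [set~ a] (X ++ X).
Proof.
move=> -> euv; have nil s : {subset s <= u ++ v} -> restrict [set~ a] s = [::].
  by move=> suv; apply: restrict_nil => t /suv; rewrite euv !inE orbb => ->.
by rewrite !restrict_cat catA (nil u) ?(nil v) ?cats0 // => t tuv; rewrite mem_cat tuv ?orbT.
Qed.

Lemma drop_doubled_letter E k w u X v a : k_uniform k w -> represents E w ->
  w = u ++ X ++ X ++ v -> u ++ v = [:: a; a] -> 4 <= k ->
  k_uniform (k %/ 2) (nseq (k %/ 2) a ++ restrict [set~ a] X) /\
  represents E (nseq (k %/ 2) a ++ restrict [set~ a] X).
Proof.
move=> wk [_ Ealt] ew euv k4; set h := k %/ 2; set w' := nseq h a ++ _.
have cX z : count_mem z X = if z == a then h.-1 else h.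
  have : count_mem z w = count_mem z (u ++ v) + count_mem z X * 2.
    by rewrite ew !count_cat; lia.
  rewrite wk euv /= (eq_sym a).
  by case: (z == a) => /=; rewrite /h; lia.
have w'h : k_uniform h w'.
  move=> z; rewrite count_cat count_nseq count_restrict !inE cX /=.
  by case: (z =P a) => [->|/eqP za]; rewrite ?eqxx ?(eq_sym a) ?(negbTE za) /h /=; lia.
have wa := restrict_setC1_square ew euv.
have w'a : restrict [set~ a] w' = restrict [set~ a] X.
  rewrite restrict_cat restrict_nil ?restrict_restrict //.
  by move=> t; rewrite mem_nseq !inE => /andP[_ ->].
(* [X ++ X] has two more [y]s than [a]s, and [w'] starts with [a a]. *)
have a_alt_w y : y != a -> ~ alternate w y a.
  move=> ya; rewrite ew (catA X X v) => /alternate_infix /(alternate_count ya).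
  by rewrite !count_cat !cX eqxx (negbTE ya) /h; lia.
have a_alt_w' y : y != a -> ~ alternate w' a y.
  move=> ya; have ay : a != y by rewrite eq_sym.
  rewrite /w' -[_ ++ _]cat0s => /alternate_infix /(alternate_count ay).
  by rewrite !count_nseq /= eqxx (negbTE ay) /h; lia.
split=> //; split=> [z|x y nxy]; first by rewrite -has_pred1 has_count w'h /h; lia.
rewrite -Ealt //; case: (x =P a) => [exa|/eqP xa].
  have ya : y != a by rewrite -exa eq_sym.
  by rewrite exa; split=> [/(a_alt_w' _ ya) | /alternate_sym /(a_alt_w _ ya)].
case: (y =P a) => [->|/eqP ya].
  by split=> [/alternate_sym /(a_alt_w' _ xa) | /(a_alt_w _ xa)].
rewrite (alternate_setC1 xa ya w'a) (alternate_setC1 xa ya wa).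
rewrite alternate_cat_self ?cX ?(negbTE xa) ?(negbTE ya) //.
by rewrite /h; lia.
Qed.

End Shrinking.

Section LongSquare.
Variable V : finType.
Implicit Types (E : rel V) (s w u X v : seq V).

Lemma even_counts_size_le2 s : size s <= 2 -> (forall z, ~~ odd (count_mem z s)) ->
  s = [::] \/ exists a, s = [:: a; a].
Proof.
case: s => [|a [|b []]] // _ ev; [by left | by have := ev a; rewrite /= eqxx |].
right; exists a; case: (b =P a) => [-> //|/eqP ba].
by have := ev a; rewrite /= eqxx (negbTE ba).
Qed.

Lemma exists_notin s : size s < #|V| -> exists z, z \notin s.
Proof.
move=> ltsV; case: (pickP (predC (mem s))) => [z zs|all_s]; first by exists z.
suff : #|V| <= size s by lia.
apply: leq_trans (card_size s); apply: subset_leq_card; apply/subsetP => z _.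
by have := all_s z; rewrite /= => /negbFE.
Qed.

Lemma proper_square_exceptional E k w (S : {set V}) u X v :
  k_uniform k w -> represents E w -> 2 <= k -> S != setT ->
  k * #|V| <= 2 * size X + 2 -> restrict S w = u ++ X ++ X ++ v -> exceptional E.
Proof.
move=> wk Ew k2 SnV longX wS.
have sizeS : size u + 2 * size X + size v = k * #|S|.
  by rewrite -(size_restrict_uniform S wk) wS !size_cat; lia.
have ltSV : #|S| < #|V| by rewrite -cardsT; apply: proper_card; rewrite properT.
have kS : k * #|S| <= k * #|V| - k.
  by rewrite -{3}(muln1 k) -mulnBr leq_mul2l; apply/orP; right; lia.
have /size0nil u0 : size u = 0 by lia.
have /size0nil v0 : size v = 0 by lia.
have k2' : k = 2 by nia.
subst u v k; rewrite /= cats0 in wS; apply: exceptional_of_square wk Ew _ wS; lia.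
Qed.

Lemma full_square_exceptional E k w u X v :
  representation_number E k -> k_uniform k w -> represents E w -> 2 < #|V| ->
  w = u ++ X ++ X ++ v -> size (u ++ v) <= 2 -> exceptional E.
Proof.
move=> [_ kmin] wk Ew V3 ew small.
have cw z : k = count_mem z (u ++ v) + (count_mem z X).*2.
  by rewrite -(wk z) ew !count_cat -addnn; lia.
have [c cuv] : exists c, c \notin u ++ v by apply: exists_notin; lia.
have even_uv z : ~~ odd (count_mem z (u ++ v)).
  have := cw z; have := cw c; rewrite (count_memPn cuv) add0n => -> /(congr1 odd).
  by rewrite oddD !odd_double addbF => <-.
case: (even_counts_size_le2 small even_uv) => [/(congr1 size) | [a euv]].
  rewrite size_cat => /eqP; rewrite addn_eq0 => /andP[/eqP/size0nil u0 /eqP/size0nil v0].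
  have k_gt0 : 0 < k by rewrite -(wk c) -has_count has_pred1 Ew.1.
  subst u v w; rewrite /= cats0 in wk Ew; exfalso; apply: (kmin (k %/ 2)); first lia.
  by exists X; apply: half_square_representant.
have cwa := cw a; rewrite euv /= eqxx /= in cwa.
have [k2|kn2] := eqVneq k 2; last first.
  exfalso; apply: (kmin (k %/ 2)); first lia.
  by eexists; apply: drop_doubled_letter wk Ew ew euv _; move: cwa kn2; rewrite -addnn; lia.
have Xa : count_mem a X = 0 by move: cwa; rewrite k2; case: (count_mem a X).
rewrite k2 in wk; apply: (exceptional_of_square (S := [set~ a]) (X := X) wk Ew).
  by rewrite cardsC1 subn1.
rewrite (restrict_setC1_square ew euv) restrict_id // => t.
rewrite mem_cat orbb !inE; apply: contraTneq => ->.
by rewrite -has_pred1 has_count Xa.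
Qed.

Lemma long_square_exceptional E k w (S : {set V}) u X v :
  representation_number E k -> k_uniform k w -> represents E w -> 2 <= k -> 2 < #|V| ->
  k * #|V| <= 2 * size X + 2 -> restrict S w = u ++ X ++ X ++ v -> exceptional E.
Proof.
move=> repk wk Ew k2 V3 longX wS.
have [SV|SnV] := eqVneq S setT; last exact: proper_square_exceptional wk Ew k2 SnV longX wS.
have sizeS := size_restrict_uniform S wk; rewrite wS SV cardsT !size_cat in sizeS.
rewrite SV restrictT in wS; apply: full_square_exceptional repk wk Ew V3 wS _.
by rewrite size_cat; lia.
Qed.

End LongSquare.

Theorem mainTheorem10 (V : finType) (E : rel V) (k : nat) :
  simple_graph E ->
  word_representable E ->
  representation_number E k ->
  ~ (circle_graph E /\ has_induced_clique E (#|V| - 1)) ->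
  csf_uniform_word_representable E ((k * #|V|).+1 %/ 2 - 1).
Proof.
move=> Esimple _ repk not_exc; have [[w [wk Ew]] _] := repk.
have [V2|V3] := leqP #|V| 2; first by case: not_exc; apply: exceptional_of_card_le2.
have /card_gt0P[a _] : 0 < #|V| by lia.
have k_gt0 : 0 < k by rewrite -(wk a) -has_count has_pred1 Ew.1.
have [k1|k_ne1] := eqVneq k 1.
  subst k; have [w2 Eww] := double_representant k_gt0 wk Ew.
  case: not_exc; apply: (exceptional_of_square (S := [set~ a]) w2 Eww).
    by rewrite cardsC1 subn1.
  exact: restrict_cat.
exists w; split; first by exists k.
split=> // -[S [u [X [v [_ _ longX wS]]]]].
by case: not_exc; apply: long_square_exceptional repk wk Ew _ V3 _ wS; lia.
Qed.
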